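(* Let $s>1$ be an integer and $k\in\{1,2,\ldots,s-1\}$. Then the indexed family $\{A_\varepsilon\colon \varepsilon\in I^s,\ |\varepsilon|=k\}$ defines a partition of $I^{s-1}$; that is, the union of its members is $I^{s-1}$ and $A_\varepsilon\cap A_\gamma=\emptyset$ whenever $\varepsilon\neq\gamma$ (the empty set is allowed as a member).
   Context: Let $I=\{0,1\}$ and for $\varepsilon\in I^s$ let $|\varepsilon|=\sum_i\varepsilon_i$. Let $\alpha=(0,\ldots,0)$ and $\omega=(1,\ldots,1)$ in $I^s$. For $\varepsilon\in I^s\setminus\{\alpha,\omega\}$ there is a unique index $i=t(\varepsilon)\in\{1,\ldots,s-1\}$ with $\varepsilon_i\neq\varepsilon_{i+1}=\varepsilon_{i+2}=\cdots=\varepsilon_s$, and one sets $A_\varepsilon=\{\varepsilon_1\}\times\cdots\times\{\varepsilon_i\}\times I^{s-1-i}\subseteq I^{s-1}$. (Note that if $1\leqslant|\varepsilon|\leqslant s-1$ then $\varepsilon\notin\{\alpha,\omega\}$.) *)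

(* I = {0,1} is modelled by bool (false = 0, true = 1);
   I^n is {ffun 'I_n -> bool}; coordinates are accessed 1-based via [coord]. *)
From mathcomp Require Import all_boot.
Set Implicit Arguments. Unset Strict Implicit. Unset Printing Implicit Defensive.

(* 1-based coordinate: coord e m = e_m for 1 <= m <= n (default false otherwise) *)
Definition coord (n : nat) (e : {ffun 'I_n -> bool}) (m : nat) : bool :=
  match @insub nat (fun j => j < n) _ m.-1 with
  | Some j => e j
  | None => false
  end.

Definition weight (n : nat) (e : {ffun 'I_n -> bool}) : nat :=
  \sum_(i < n) nat_of_bool (e i).

Definition is_t (s : nat) (e : {ffun 'I_s -> bool}) (i : nat) : Prop :=
  [/\ 1 <= i <= s - 1,
      coord e i != coord e i.+1
    & forall j, i.+1 <= j <= s -> coord e j = coord e i.+1].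

(* membership in A_e = {e_1} x ... x {e_{t(e)}} x I^{s-1-t(e)} ⊆ I^{s-1}
   (empty when t(e) is undefined, i.e. e ∈ {alpha, omega}) *)
Definition inA (s : nat) (e : {ffun 'I_s -> bool}) (x : {ffun 'I_(s - 1) -> bool})
  : Prop :=
  exists i, is_t e i /\ forall j, 1 <= j <= i -> coord x j = coord e j.

From mathcomp Require Import all_boot.
From mathcomp Require Import zify.

(* For x in I^(s-1) and 1 <= i <= s-1 let [extend x i] be the word x_1 ... x_i
   followed by s - i copies of the complement of x_i.  Its t-index is i, and x
   lies in A_e exactly when e = extend x i for some i, so the claim is that
   exactly one of these words has weight k.  Two of them are comparable
   coordinatewise (they agree up to the smaller index, after which the shorter
   one is constant), so equal weights force equality.  For existence, as t
   grows the open interval (|x_1 ... x_t|, |x_1 ... x_t| + s - t) loses one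
   endpoint at each step, namely the weight of extend x (t+1); it starts as
   (0, s), which contains k, and ends empty at t = s - 1. *)

Lemma coordE n (e : {ffun 'I_n -> bool}) (a : 'I_n) : coord e a.+1 = e a.
Proof.
have a_lt : a.+1.-1 < n := ltn_ord a.
by rewrite /coord insubT /=; congr (e _); apply: val_inj.
Qed.

Lemma coord_ffun n (F : nat -> bool) m : 0 < m <= n ->
  coord [ffun a : 'I_n => F (val a)] m = F m.-1.
Proof.
move=> m_range; have m_lt : m.-1 < n by lia.
by rewrite /coord insubT /= ffunE.
Qed.

Lemma weightE n (e : {ffun 'I_n -> bool}) :
  weight e = \sum_(0 <= a < n) coord e a.+1.
Proof. by rewrite big_mkord; apply: eq_bigr => a _; rewrite coordE. Qed.

Lemma weight_implyb_eq n (e g : {ffun 'I_n -> bool}) :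
  (forall a, e a ==> g a) -> weight e = weight g -> e = g.
Proof.
move=> le_eg /eqP; rewrite /weight.
have le_a a : e a <= g a ?= iff (e a == g a :> nat).
  by apply: leqif_eq; move: (le_eg a); case: (e a); case: (g a).
rewrite (leqif_sum (fun a _ => le_a a)) => /forallP eq_eg.
by apply/ffunP => a; move: (eq_eg a); case: (e a); case: (g a).
Qed.

Section Extension.

Context {s : nat} (x : {ffun 'I_(s - 1) -> bool}).

Definition extend (i : nat) : {ffun 'I_s -> bool} :=
  [ffun a : 'I_s => if a < i then coord x a.+1 else ~~ coord x i].

Definition ones (t : nat) : nat := \sum_(0 <= a < t) coord x a.+1.

Lemma onesS t : ones t.+1 = ones t + coord x t.+1.
Proof. by rewrite /ones big_nat_recr. Qed.

Lemma coord_extend i j : 0 < j <= s ->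
  coord (extend i) j = if j <= i then coord x j else ~~ coord x i.
Proof.
move=> j_range.
rewrite (@coord_ffun s (fun a => if a < i then coord x a.+1 else ~~ coord x i)) //.
by have -> : (j.-1 < i) = (j <= i) by lia; have -> : j.-1.+1 = j by lia.
Qed.

Lemma extend_is_t i : 1 <= i <= s - 1 -> is_t (extend i) i.
Proof.
move=> i_range; split=> //.
  by rewrite !coord_extend ?leqnn ?ltnn; [case: (coord x i) | lia | lia].
move=> j j_range; rewrite !coord_extend ?ltnn; try lia.
by have -> : (j <= i) = false by lia.
Qed.

Lemma inA_extendP e : inA e x <-> exists2 i, 1 <= i <= s - 1 & e = extend i.
Proof.
split=> [[i [[i_range ne_i eq_tail] eq_pre]] | [i i_range ->]].
  exists i => //; apply/ffunP => a.
  rewrite -[e a]coordE -[extend i a]coordE coord_extend ?ltn_ord //.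
  case: ifP => a_i; first by rewrite eq_pre //; lia.
  rewrite eq_tail; last by have := ltn_ord a; lia.
  rewrite eq_pre; last by lia.
  by move: ne_i; case: (coord e i); case: (coord e i.+1).
exists i; split; first exact: extend_is_t.
move=> j j_range; rewrite coord_extend; last by lia.
by have -> : j <= i by lia.
Qed.

Lemma weight_extend i : i <= s ->
  weight (extend i) = ones i + (s - i) * ~~ coord x i.
Proof.
move=> i_le; rewrite weightE (big_cat_nat _ (n := i)) //=; congr (_ + _).
  apply: eq_big_nat => a a_i; rewrite coord_extend; last by lia.
  by have -> : a < i by lia.
rewrite -sum_nat_const_nat; apply: eq_big_nat => a a_i.
rewrite coord_extend; last by lia.
by have -> : (a < i) = false by lia.
Qed.

Lemma weight_extendS t : t < s ->
  weight (extend t.+1) = ones t + (if coord x t.+1 then 1 else s - t.+1).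
Proof.
by move=> t_lt; rewrite weight_extend // onesS; case: (coord x t.+1) => /=; lia.
Qed.

Lemma extend_weight_or_between k t : 1 <= k <= s - 1 -> t <= s - 1 ->
  ones t < k < ones t + (s - t) \/ exists2 i, 1 <= i <= t & weight (extend i) = k.
Proof.
move=> k_range; elim: t => [|t IH] t_le.
  by left; rewrite /ones big_geq //; lia.
have [/andP [lo hi] | [i i_range w_i]] := IH (ltnW t_le); last first.
  by right; exists i => //; lia.
have t_lt : t < s by lia.
have w_t := @weight_extendS t t_lt.
rewrite onesS; case: (coord x t.+1) in w_t *; rewrite /= in w_t *.
  have [k_eq | k_ne] := eqVneq (ones t + 1) k; last by left; lia.
  by right; exists t.+1; [lia | rewrite w_t].
have [k_eq | k_ne] := eqVneq (ones t + (s - t.+1)) k; last by left; lia.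
by right; exists t.+1; [lia | rewrite w_t].
Qed.

Lemma exists_extend_weight k : 1 <= k <= s - 1 ->
  exists2 i, 1 <= i <= s - 1 & weight (extend i) = k.
Proof.
move=> k_range.
by have [|//] := @extend_weight_or_between k (s - 1) k_range (leqnn _); lia.
Qed.

Lemma extend_weight_inj i i' :
  weight (extend i) = weight (extend i') -> extend i = extend i'.
Proof.
wlog le_ii' : i i' / i <= i'.
  by move=> wlog_le; case: (leqP i i') => [|/ltnW] le w; [|symmetry]; apply: wlog_le.
have agree a : a < i -> a < i' by lia.
case x_i: (coord x i) => w.
  apply: weight_implyb_eq w => a; rewrite !ffunE x_i.
  by case: (boolP (a < i)) => // a_i; rewrite agree // implybb.
apply/esym/weight_implyb_eq; last exact/esym.
move=> a; rewrite !ffunE x_i.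
by case: (boolP (a < i)) => a_i; [rewrite agree // implybb | rewrite implybT].
Qed.

End Extension.

Theorem lemma1 (s k : nat) (hs : 1 < s) (hk : 1 <= k <= s - 1) :
  (forall x : {ffun 'I_(s - 1) -> bool},
      exists e : {ffun 'I_s -> bool}, weight e = k /\ inA e x) /\
  (forall e g : {ffun 'I_s -> bool}, weight e = k -> weight g = k -> e <> g ->
      forall x : {ffun 'I_(s - 1) -> bool}, ~ (inA e x /\ inA g x)).
Proof.
split=> [x | e g w_e w_g ne_eg x].
  have [i i_range w_i] := exists_extend_weight x k hk.
  by exists (extend x i); split=> //; apply/inA_extendP; exists i.
move=> [/inA_extendP [i _ def_e] /inA_extendP [i' _ def_g]].
apply/ne_eg; rewrite def_e def_g; apply: extend_weight_inj.
by rewrite -def_e -def_g w_e w_g.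
Qed.
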